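(* Let $\langle\mathcal{P},\mathcal{S}\rangle$ be an ADP problem, let $\alpha\in\mathcal{S}$, and let $\mathrm{Pre}(\alpha)$ be the set of all ADPs $\beta\in\mathcal{P}$ such that the $\mathcal{P}$-dependency graph has an edge from some node in $\mathrm{dp}^\bot(\beta)$ to some node in $\mathrm{dp}^\bot(\alpha)$. If $\mathrm{Pre}(\alpha)\cap\mathcal{S}=\emptyset$, then the processor $\mathrm{Proc}_{\mathtt{KP}}(\langle\mathcal{P},\mathcal{S}\rangle)=(\mathrm{Pol}_0,\{\langle\mathcal{P},\mathcal{S}\setminus\{\alpha\}\rangle\})$ is sound.
   Context: Annotated dependency pairs (ADPs): over a finite signature $\Sigma$ with fresh annotated copies $f^\sharp$ of the defined symbols, an ADP is $\ell\to\{p_1:r_1,\dots,p_k:r_k\}^m$ with $\ell$ a non-variable unannotated term, $r_j$ possibly annotated, $\mathcal{V}(r_j)\subseteq\mathcal{V}(\ell)$, $0<p_j\le1$, $\sum p_j=1$, flag $m\in\{\mathsf{true},\mathsf{false}\}$. For a set $\mathcal{P}$, defined symbols are roots of left-hand sides; basic terms are $f(t_1,\dots,t_k)$ with $f$ defined, $t_i$ free of defined symbols; $|t|$ term size; $\flat$ removes annotations; $t^\sharp$ annotates the root; $\flat^\uparrow_\pi$ removes annotations strictly above $\pi$; $t\trianglelefteq_\sharp s$ means $t=\flat(s|_\pi)$ for a position $\pi$ of $s$ carrying an annotated symbol. Rewriting with $\mathcal{P}$ (innermost): at a position $\pi$ with defined or annotated symbol, ADP $\ell\to\{p_j:r_j\}^m\in\mathcal{P}$,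 $\sigma$ with $\flat(s|_\pi)=\ell\sigma$ whose proper subterms are normal forms: $t_j=s[r_j\sigma]_\pi$ (at: $m=\mathsf{true}$, $\pi$ annotated), $s[\flat(r_j)\sigma]_\pi$ (nt), $\flat^\uparrow_\pi(s[r_j\sigma]_\pi)$ (af), $\flat^\uparrow_\pi(s[\flat(r_j)\sigma]_\pi)$ (nf). A term is in argument normal form w.r.t. $\mathcal{P}$ if all its proper subterms are normal forms. $\mathcal{P}$-chain trees: possibly infinite finitely-branching trees with nodes $(p_v:t_v)$, root probability 1, $t_v$ rewriting to $\{\tfrac{p_w}{p_v}:t_w\}_w$ at inner nodes. For $\mathcal{S}\subseteq\mathcal{P}$, $\operatorname{edl}_{\langle\mathcal{P},\mathcal{S}\rangle}(\mathfrak{T})$ sums $p_v$ over inner nodes rewritten by (at)/(af)-steps with ADPs in $\mathcal{S}$; $\operatorname{edh}_{\langle\mathcal{P},\mathcal{S}\rangle}(t)$ = sup over chain trees rooted at $t^\sharp$; $\iota_{\langle\mathcal{P},\mathcal{S}\rangle}=\iota(n\mapsto\sup\{\operatorname{edh}_{\langle\mathcal{P},\mathcal{S}\rangle}(t)\mid t\text{ basic},|t|\le n\})$; complexities $\mathfrak{C}=\{\mathrm{Pol}_0,\mathrm{Pol}_1,\dots,\mathrm{Exp},\mathrm{2\text{-}Exp},\mathrm{Fin},\omega\}$ ordered in that order, $\oplus$ = maximum, $\iota(f)=\mathrm{Pol}_a$ for least $a$ with $f\in O(n^a)$, else $\mathrm{Exp}$ if $f\in O(2^{\mathrm{pol}(n)})$,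 else $\mathrm{2\text{-}Exp}$ if $f\in O(2^{2^{\mathrm{pol}(n)}})$, else $\mathrm{Fin}$ if $f$ never equals $\omega$, else $\omega$. Dependency graph: $\mathrm{np}(\mathcal{P})=\{\ell\to\flat(r_j)\mid\ell\to\{p_1:r_1,\dots,p_k:r_k\}^{\mathsf{true}}\in\mathcal{P}\}$. For $\alpha=\ell\to\{p_1:r_1,\dots,p_k:r_k\}^m$: $\mathrm{dp}(\alpha)=\{\ell^\sharp\to t^\sharp\mid1\le j\le k,t\trianglelefteq_\sharp r_j\}$; $\mathrm{dp}^\bot(\alpha)=\{\ell^\sharp\to\bot\}$ (fresh $\bot$) if $\mathrm{dp}(\alpha)=\emptyset$, else $\mathrm{dp}(\alpha)$; $\mathrm{dp}(\mathcal{P})=\bigcup_{\alpha\in\mathcal{P}}\mathrm{dp}^\bot(\alpha)$. The $\mathcal{P}$-dependency graph has nodes $\mathrm{dp}(\mathcal{P})$ and an edge from $\ell_1^\sharp\to t_1^\sharp$ to $\ell_2^\sharp\to\dots$ iff there are substitutions $\sigma_1,\sigma_2$ such that $t_1^\sharp\sigma_1$ reduces in zero or more innermost $\mathrm{np}(\mathcal{P})$-steps to $\ell_2^\sharp\sigma_2$ and $\ell_1^\sharp\sigma_1,\ell_2^\sharp\sigma_2$ are in argument normal form w.r.t. $\mathcal{P}$. ADP problems, proof trees, soundness: ADP problem $\langle\mathcal{P},\mathcal{S}\rangle$, $\mathcal{P}$ finite, $\mathcal{S}\subseteq\mathcal{P}$, solved iff $\mathcal{S}=\emptyset$. A processor maps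 an ADP problem to $(c,\{\langle\mathcal{P}_1,\mathcal{S}_1\rangle,\dots,\langle\mathcal{P}_n,\mathcal{S}_n\rangle\})$. A proof tree is a finite tree with labels $L_{\mathcal{A}}$ (ADP problems), $L_{\mathcal{C}}$ (complexities) where each inner node and its children arise by a processor application and leaves carry $\mathrm{Pol}_0$ if solved, $\omega$ otherwise; it is well formed if for each node $v$ with $L_{\mathcal{A}}(v)=\langle\mathcal{P},\mathcal{S}\rangle$ and root path $v_1,\dots,v_k=v$: $\iota_{\langle\mathcal{P},\mathcal{S}\rangle}\sqsubseteq L_{\mathcal{C}}(v_1)\oplus\dots\oplus L_{\mathcal{C}}(v_{k-1})\oplus\max\{L'_{\mathcal{C}}(w)\mid w$ reachable from $v$, incl. $v\}$ and $\iota_{\langle\mathcal{P},\mathcal{P}\setminus\mathcal{S}\rangle}\sqsubseteq L_{\mathcal{C}}(v_1)\oplus\dots\oplus L_{\mathcal{C}}(v_{k-1})$ ($L'_{\mathcal{C}}=L_{\mathcal{C}}$ on inner nodes, $\iota_{L_{\mathcal{A}}(w)}$ on leaves). A processor with output $(c,\{\langle\mathcal{P}_i,\mathcal{S}_i\rangle\}_{i\le n})$ on $\langle\mathcal{P},\mathcal{S}\rangle$ is sound if for every well-formed proof tree and node $v$ labeled $\langle\mathcal{P},\mathcal{S}\rangle$ with root path $v_1,\dots,v_k=v$: $\iota_{\langle\mathcal{P},\mathcal{S}\rangle}\sqsubseteq L_{\mathcal{C}}(v_1)\oplus\dots\oplus L_{\mathcal{C}}(v_{k-1})\oplus c\oplus\iota_{\langle\mathcal{P}_1,\mathcal{S}_1\rangle}\oplus\dots\oplus\iota_{\langle\mathcal{P}_n,\mathcal{S}_n\rangle}$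 and $\iota_{\langle\mathcal{P}_i,\mathcal{P}_i\setminus\mathcal{S}_i\rangle}\sqsubseteq L_{\mathcal{C}}(v_1)\oplus\dots\oplus L_{\mathcal{C}}(v_{k-1})\oplus c$ for all $i$. *)

From Stdlib Require List.
From HB Require Import structures.
From mathcomp Require Import all_boot all_order all_algebra.
From mathcomp Require Import boolp classical_sets cardinality reals ereal.
Set Implicit Arguments. Unset Strict Implicit. Unset Printing Implicit Defensive.
Import Order.TTheory GRing.Theory Num.Theory.

Local Open Scope classical_set_scope.
Local Open Scope ring_scope.

Inductive cplx := Pol of nat | CExp | C2Exp | CFin | COmega.

Definition cle (c d : cplx) : bool :=
  match c, d with
  | Pol a, Pol b => (a <= b)%N
  | Pol _, _ => true
  | CExp, Pol _ => false
  | CExp, _ => true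
  | C2Exp, Pol _ => false
  | C2Exp, CExp => false
  | C2Exp, _ => true
  | CFin, CFin => true
  | CFin, COmega => true
  | CFin, _ => false
  | COmega, COmega => true
  | COmega, _ => false
  end.

Definition cmax (c d : cplx) : cplx := if cle c d then d else c.

(* Terms over a finite signature [sym] with arities [ar]; the symbols
   satisfying [dsym] are the defined symbols having annotated copies f^#.
   A node [App f b ts] is annotated iff [b = true]. *)
Inductive term (sym : Type) := Var of nat | App of sym & bool & seq (term sym).
Arguments Var {sym}.

Section Terms.
Variable sym : finType.
Variable ar : sym -> nat.
Variable dsym : pred sym.
Notation term := (term sym).

Fixpoint wf (t : term) : bool :=
  match t with
  | Var _ => true
  | App f b ts => [&& size ts == ar f, b ==> dsym f & all wf ts]
  end.

Fixpoint unann (t : term) : bool :=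
  match t with Var _ => true | App _ b ts => ~~ b && all unann ts end.

Fixpoint flat (t : term) : term :=
  match t with Var x => Var x | App f _ ts => App f false (map flat ts) end.

Definition sharp (t : term) : term :=
  match t with Var x => Var x | App f _ ts => App f true ts end.

Fixpoint subst (s : nat -> term) (t : term) : term :=
  match t with Var x => s x | App f b ts => App f b (map (subst s) ts) end.

Fixpoint occurs (x : nat) (t : term) : bool :=
  match t with Var y => y == x | App _ _ ts => has (occurs x) ts end.

Fixpoint tsize (t : term) : nat :=
  match t with Var _ => 1 | App _ _ ts => (sumn (map tsize ts)).+1 end.

Fixpoint symbols (t : term) : seq sym :=
  match t with Var _ => [::] | App f _ ts => f :: flatten (map symbols ts) end.

Definition root (t : term) : option sym :=
  match t with Var _ => None | App f _ _ => Some f end.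

Fixpoint subt (t : term) (p : seq nat) : option term :=
  match p with
  | [::] => Some t
  | i :: p' =>
      match t with
      | Var _ => None
      | App _ _ ts => if (i < size ts)%N then subt (nth (Var 0) ts i) p' else None
      end
  end.

Fixpoint repl (t : term) (p : seq nat) (u : term) : term :=
  match p with
  | [::] => u
  | i :: p' =>
      match t with
      | Var _ => t
      | App f b ts => App f b (set_nth (Var 0) ts i (repl (nth (Var 0) ts i) p' u))
      end
  end.

Fixpoint flat_above (p : seq nat) (t : term) : term :=
  match p with
  | [::] => t
  | i :: p' =>
      match t with
      | Var _ => t
      | App f _ ts => App f false (set_nth (Var 0) ts i (flat_above p' (nth (Var 0) ts i)))
      end
  end.

Definition is_annot_root (t : term) : bool :=
  match t with App _ b _ => b | Var _ => false end.

Definition annot_at (s : term) (p : seq nat) : bool :=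
  match subt s p with Some u => is_annot_root u | None => false end.

Definition sharp_sub (t s : term) : Prop :=
  exists p u, subt s p = Some u /\ is_annot_root u /\ t = flat u.

(* Annotated dependency pairs  l -> {p1:r1, ..., pk:rk}^m              *)
Variable R : realType.

Record adp := ADP { lhs : term; rhs : seq (R * term); flag : bool }.

Definition adp_ok (a : adp) : Prop :=
  [/\ (exists f ts, lhs a = App f false ts), wf (lhs a), unann (lhs a),
      (forall pr, List.In pr (rhs a) ->
         [/\ 0 < pr.1, pr.1 <= 1, wf pr.2 &
             forall x, occurs x pr.2 -> occurs x (lhs a)]) &
      \sum_(pr <- rhs a) pr.1 = 1].

Definition problem_ok (P S : set adp) : Prop :=
  [/\ finite_set P, S `<=` P & forall a, P a -> adp_ok a].

Definition defined (P : set adp) (f : sym) : Prop :=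
  exists a, P a /\ root (lhs a) = Some f.

Definition basic (P : set adp) (t : term) : Prop :=
  [/\ wf t, unann t &
      exists f ts, [/\ t = App f false ts, defined P f &
        forall u g, List.In u ts -> g \in symbols u -> ~ defined P g]].

Definition reducible (P : set adp) (t : term) : Prop :=
  exists p u a sg, [/\ subt (flat t) p = Some u, P a & u = subst sg (lhs a)].

Definition nf (P : set adp) (t : term) : Prop := ~ reducible P t.

Definition argnf (P : set adp) (t : term) : Prop :=
  forall p u, p != [::] -> subt t p = Some u -> nf P u.

Definition adp_step (P : set adp) (a : adp) (pos : seq nat) (s : term)
    (res : seq (R * term)) : Prop :=
  P a /\ exists u sg,
    [/\ subt s pos = Some u,
        flat u = subst sg (lhs a),
        argnf P (flat u) &
        res = [seq (pr.1,
                   if annot_at s pos then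
                     (if flag a then repl s pos (subst sg pr.2)
                      else flat_above pos (repl s pos (subst sg pr.2)))
                   else
                     (if flag a then repl s pos (subst sg (flat pr.2))
                      else flat_above pos (repl s pos (subst sg (flat pr.2)))))
              | pr <- rhs a]].

(* P-chain trees: nodes are addresses (seq nat) of a possibly infinite,
   finitely branching tree; [ct_lab v = Some (p_v, t_v)]; [ct_nch v] is the
   number of children; inner nodes record the ADP and position of the step. *)
Record chain_tree := CT {
  ct_lab : seq nat -> option (R * term);
  ct_nch : seq nat -> nat;
  ct_rule : seq nat -> adp;
  ct_pos : seq nat -> seq nat }.

Definition is_chain_tree (P : set adp) (T : chain_tree) (t0 : term) : Prop :=
  [/\ ct_lab T [::] = Some (1, t0),
      (forall v i, ct_lab T (rcons v i) <> None <-> (ct_lab T v <> None /\ (i < ct_nch T v)%N)) &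
      (forall v p t, ct_lab T v = Some (p, t) -> (0 < ct_nch T v)%N ->
         exists res, [/\ adp_step P (ct_rule T v) (ct_pos T v) t res,
                         size res = ct_nch T v &
                         forall i, (i < size res)%N ->
                           ct_lab T (rcons v i) =
                             Some (p * (nth (0, Var 0) res i).1, (nth (0, Var 0) res i).2)])].

Definition counted (S : set adp) (T : chain_tree) (v : seq nat) : Prop :=
  exists p t, [/\ ct_lab T v = Some (p, t), (0 < ct_nch T v)%N, S (ct_rule T v)
                & annot_at t (ct_pos T v)].

Definition node_prob (T : chain_tree) (v : seq nat) : R :=
  if ct_lab T v is Some (p, _) then p else 0.

Local Open Scope ereal_scope.

(* edl_<P,S>(T) = sum of p_v over counted inner nodes (possibly infinite) *)
Definition edl (S : set adp) (T : chain_tree) : \bar R :=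
  ereal_sup [set \sum_(v <- l) (node_prob T v)%:E |
             l in [set l : seq (seq nat) | uniq l /\ forall v, v \in l -> counted S T v]].

Definition edh (P S : set adp) (t : term) : \bar R :=
  ereal_sup [set edl S T | T in [set T | is_chain_tree P T (sharp t)]].

Definition bigO (f : nat -> \bar R) (g : nat -> R) : Prop :=
  exists (c : R) (N : nat), forall n, (N <= n)%N -> f n <= (c * g n)%:E.

(* value of the polynomial with natural coefficients p (lowest first) *)
Definition polyval (p : seq nat) (n : nat) : nat :=
  foldr (fun a acc => a + n * acc)%N 0%N p.

Definition inPol (a : nat) (f : nat -> \bar R) : Prop := bigO f (fun n => (n%:R) ^+ a)%R.
Definition inExp (f : nat -> \bar R) : Prop :=
  exists p, bigO f (fun n => (2%:R) ^+ (polyval p n))%R.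
Definition in2Exp (f : nat -> \bar R) : Prop :=
  exists p, bigO f (fun n => (2%:R) ^+ (2 ^ polyval p n))%R.
Definition inFin (f : nat -> \bar R) : Prop := forall n, f n != +oo.

Lemma ex_inPol (f : nat -> \bar R) : (exists a, inPol a f) -> exists a, `[< inPol a f >].
Proof. by case=> a h; exists a; apply/asboolP. Qed.

Definition iota (f : nat -> \bar R) : cplx :=
  match pselect (exists a, inPol a f) with
  | left H => Pol (ex_minn (ex_inPol H))
  | right _ =>
    if `[< inExp f >] then CExp
    else if `[< in2Exp f >] then C2Exp
    else if `[< inFin f >] then CFin
    else COmega
  end.

Definition iota_prob (P S : set adp) : cplx :=
  iota (fun n => ereal_sup [set edh P S t | t in [set t | basic P t /\ (tsize t <= n)%N]]).

Local Close Scope ereal_scope.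

Definition dpnode := (term * option term)%type.   (* None = bottom *)

Definition np_rule (P : set adp) (l r : term) : Prop :=
  exists a, [/\ P a, flag a, lhs a = l &
    exists pr, List.In pr (rhs a) /\ r = flat pr.2].

Definition np_nf (P : set adp) (t : term) : Prop :=
  ~ exists p u l r sg, [/\ subt t p = Some u, np_rule P l r & u = subst sg l].

Definition np_step (P : set adp) (s s' : term) : Prop :=
  exists p u l r sg,
    [/\ subt s p = Some u, np_rule P l r, u = subst sg l,
        (forall q w, q != [::] -> subt u q = Some w -> np_nf P w) &
        s' = repl s p (subst sg r)].

Inductive np_star (P : set adp) : term -> term -> Prop :=
| np_refl s : np_star P s s
| np_trans s s' s'' : np_step P s s' -> np_star P s' s'' -> np_star P s s''.

Definition subst_ok (sg : nat -> term) : Prop := forall x, wf (sg x) && unann (sg x).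

Definition dp_edge (P : set adp) (n1 n2 : dpnode) : Prop :=
  match n1.2 with
  | None => False
  | Some t1 =>
      exists sg1 sg2, [/\ subst_ok sg1, subst_ok sg2,
        np_star P (subst sg1 t1) (subst sg2 n2.1),
        argnf P (subst sg1 n1.1) & argnf P (subst sg2 n2.1)]
  end.

Definition dp (a : adp) : set dpnode :=
  [set n | exists pr t, [/\ List.In pr (rhs a), sharp_sub t pr.2 &
                           n = (sharp (lhs a), Some (sharp t))]].

Definition dp_bot (a : adp) : set dpnode :=
  [set n | dp a n \/ (dp a = set0 /\ n = (sharp (lhs a), None))].

Definition Pre (P : set adp) (a : adp) : set adp :=
  [set b | P b /\ exists n1 n2, [/\ dp_bot b n1, dp_bot a n2 & dp_edge P n1 n2]].

Inductive ptree := PT of set adp & set adp & cplx & seq ptree.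

Fixpoint pt_at (T : ptree) (v : seq nat) : option ptree :=
  match v with
  | [::] => Some T
  | i :: v' => let: PT _ _ _ ch := T in
               if (i < size ch)%N then pt_at (nth T ch i) v' else None
  end.

(* L_C(v1) (+) ... (+) L_C(v_{k-1}) along the root path to v *)
Fixpoint anc (T : ptree) (v : seq nat) : cplx :=
  match v with
  | [::] => Pol 0
  | i :: v' => let: PT _ _ c ch := T in cmax c (anc (nth T ch i) v')
  end.

Fixpoint submax (T : ptree) : cplx :=
  let: PT P0 S0 c ch := T in
  if ch is [::] then iota_prob P0 S0 else foldr cmax c (map submax ch).

Definition is_proof_tree (T : ptree) : Prop :=
  (forall v P S c ch, pt_at T v = Some (PT P S c ch) -> problem_ok P S) /\
  (forall v P S c, pt_at T v = Some (PT P S c [::]) ->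
     (S = set0 -> c = Pol 0) /\ (S <> set0 -> c = COmega)).

Definition well_formed (T : ptree) : Prop :=
  forall v P S c ch, pt_at T v = Some (PT P S c ch) ->
    cle (iota_prob P S) (cmax (anc T v) (submax (PT P S c ch))) /\
    cle (iota_prob P (P `\` S)) (anc T v).

Definition sound_output (P S : set adp) (c : cplx) (outs : seq (set adp * set adp)) : Prop :=
  forall T, is_proof_tree T -> well_formed T ->
  forall v c' ch, pt_at T v = Some (PT P S c' ch) ->
    cle (iota_prob P S)
        (foldr cmax (cmax (anc T v) c) [seq iota_prob o.1 o.2 | o <- outs]) /\
    (forall Pi Si, List.In (Pi, Si) outs ->
       cle (iota_prob Pi (Pi `\` Si)) (cmax (anc T v) c)).

End Terms.

From Pilot Require Import Defs.
From mathcomp Require Import all_boot all_order all_algebra.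
From mathcomp Require Import boolp classical_sets cardinality reals ereal.
From mathcomp Require Import lra zify.
Set Implicit Arguments. Unset Strict Implicit. Unset Printing Implicit Defensive.
Import Order.TTheory GRing.Theory Num.Theory.

(* An (at)- or (af)-step with [a] at a node of a chain tree rewrites an annotation. Going
   up the tree, this annotation is either the one at the root, or it was created by an
   (at)- or (af)-step at an ancestor with an ADP [b] whose right-hand side carries it; the
   np(P)-steps below it in between yield an edge of the dependency graph from [dp^bot b]
   to [dp^bot a], so [b] lies in [Pre a] and hence not in [S]. Grouping the [a]-steps by
   their creating node and the position of the annotation, every group is an antichain
   of the tree, so its probability is at most that of the creating node (or 1 for the
   root), and a node creates at most [B] groups, where [B] bounds the number of positions
   of the right-hand sides in [P]. Hence
     edl_S <= edl_(S\a) + 1 + B * edl_(P\S)   and   edl_(P\(S\a)) <= edl_(P\S) + 1 + B * edl_(P\S),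
   every complexity class is closed under such bounds, and well-formedness of the proof
   tree bounds iota_(P, P\S) by the complexities on the path to the node. *)

(** * Terms and positions *)

Section ListIn.
Variables (T U : Type).
Implicit Types (s : seq T) (p q : pred T).

Lemma nth_In x0 s i : (i < size s)%N -> List.In (nth x0 s i) s.
Proof. by elim: s i => [|x s IH] [|i] //= Hi; [left | right; exact: IH]. Qed.

Lemma In_nth x0 s x : List.In x s -> exists2 i, (i < size s)%N & nth x0 s i = x.
Proof. by elim: s => [|y s IH] //= [<-|/IH [i Hi <-]]; [exists 0%N | exists i.+1]. Qed.

Lemma all_In p s x : all p s -> List.In x s -> p x.
Proof. by elim: s => [|y s IH] //= /andP[py ps] [<-|/(IH ps)]. Qed.

Lemma In_all p s : (forall x, List.In x s -> p x) -> all p s.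
Proof.
by elim: s => [|y s IH] //= H; rewrite H /=; [apply: IH => x Hx; apply: H; right | left].
Qed.

Lemma In_has p s x : List.In x s -> p x -> has p s.
Proof. by elim: s => [|y s IH] //= [<- ->|/IH H /H ->] //; rewrite orbT. Qed.

Lemma has_In p s : has p s -> exists2 x, List.In x s & p x.
Proof.
elim: s => [|y s IH] //= /orP[py|/IH[x Hx px]]; first by exists y => //; left.
by exists x => //; right.
Qed.

Lemma eq_map_In (f g : T -> U) s :
  (forall x, List.In x s -> f x = g x) -> map f s = map g s.
Proof.
elim: s => [|y s IH] //= H; rewrite H; last by left.
by congr cons; apply: IH => x Hx; apply: H; right.
Qed.

Lemma eq_has_In p q s : (forall x, List.In x s -> p x = q x) -> has p s = has q s.
Proof.
elim: s => [|y s IH] //= H; rewrite H; last by left.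
by congr orb; apply: IH => x Hx; apply: H; right.
Qed.

Lemma all_set_nth p x0 s i y :
  (i < size s)%N -> all p s -> p y -> all p (set_nth x0 s i y).
Proof.
by elim: s i => [|x s IH] [|i] //= Hi /andP[px ps] py; rewrite ?ps ?py ?px ?IH.
Qed.

Lemma set_nth_nth x0 s i : (i < size s)%N -> set_nth x0 s i (nth x0 s i) = s.
Proof. by elim: s i => [|x s IH] [|i] //= Hi; rewrite IH. Qed.

Lemma map_set_nth (f : T -> U) x0 s i y :
  map f (set_nth x0 s i y) = set_nth (f x0) (map f s) i (f y).
Proof. by elim: s i => [|x s IH] [|i] //=; [elim: i => //= i -> | rewrite IH]. Qed.

Lemma In_mem_flatten_map (V : eqType) (f : T -> seq V) s x y :
  List.In x s -> y \in f x -> y \in flatten (map f s).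
Proof. by elim: s => [|z s IH] //= [-> Hy|/IH H /H Hy]; rewrite mem_cat ?Hy ?orbT. Qed.

End ListIn.

Section Terms.
Variable sym : finType.
Implicit Types (t u w r : term sym) (p q pi : seq nat) (sg : nat -> term sym).

Lemma term_nested_ind (Q : term sym -> Prop) :
  (forall x, Q (Var x)) ->
  (forall f b ts, (forall t, List.In t ts -> Q t) -> Q (App f b ts)) ->
  forall t, Q t.
Proof.
move=> HV HA; fix IH 1 => -[x|f b ts]; first exact: HV.
apply: HA; elim: ts => [|t ts IHts] u /= Hu; first case: Hu.
by case: Hu => [<-|Hu]; [exact: IH | exact: IHts].
Qed.

Lemma subt_cat t p q :
  subt t (p ++ q) = if subt t p is Some u then subt u q else None.
Proof. by elim: p t => [|i p IH] [x|f b ts] //=; case: ifP. Qed.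

Lemma subt_flat t p : subt (flat t) p = omap (@flat sym) (subt t p).
Proof.
elim: p t => [|i p IH] [x|f b ts] //=.
by rewrite size_map; case: ifP => // Hi; rewrite (nth_map (Var 0)) // IH.
Qed.

Lemma flat_idem t : flat (flat t) = flat t.
Proof.
elim/term_nested_ind: t => [x|f b ts IH] //=; rewrite -map_comp; congr App.
exact: eq_map_In.
Qed.

Lemma subt_flat_idem t p u : subt (flat t) p = Some u -> flat u = u.
Proof. by rewrite subt_flat; case: (subt t p) => // w [<-]; rewrite flat_idem. Qed.

Lemma unann_flat_id t : unann t -> flat t = t.
Proof.
elim/term_nested_ind: t => [x|f b ts IH] //= /andP[/negbTE -> ua].
by congr App; rewrite -[RHS]map_id; apply: eq_map_In => x Hx; apply/IH/(all_In ua).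
Qed.

Lemma flat_unann t : unann (flat t).
Proof. by elim/term_nested_ind: t => [x|f b ts IH] //=; rewrite all_map; apply: In_all. Qed.

Lemma flat_id_unann t : flat t = t -> unann t.
Proof. by move=> <-; exact: flat_unann. Qed.

Lemma unann_subt t p u : unann t -> subt t p = Some u -> unann u.
Proof.
elim: p t => [|i p IH] [x|f b ts] //=; try by move=> H [<-].
by move=> /andP[_ ua]; case: ifP => // Hi; apply/IH/(all_In ua)/nth_In.
Qed.

Lemma annot_flat t : is_annot_root (flat t) = false.
Proof. by case: t. Qed.

Lemma occurs_flat y t : occurs y (flat t) = occurs y t.
Proof.
by elim/term_nested_ind: t => [z|f b ts IH] //=; rewrite has_map; apply: eq_has_In.
Qed.

Lemma occurs_subt y t p u : subt t p = Some u -> occurs y u -> occurs y t.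
Proof.
elim: p t => [|i p IH] [z|f b ts] //=; try by move=> [<-].
by case: ifP => // Hi Hs Ho; apply: (In_has (nth_In _ Hi)); exact: IH Hs Ho.
Qed.

Lemma occurs_subst_pos y t sg :
  occurs y t -> exists p, subt (subst sg t) p = Some (sg y).
Proof.
elim/term_nested_ind: t => [z|f b ts IH] /=; first by move=> /eqP ->; exists [::].
move=> /has_In [t0 Hin Ho]; have [p Hp] := IH _ Hin Ho.
have [i Hi Hn] := In_nth (Var 0) Hin.
by exists (i :: p) => /=; rewrite size_map Hi (nth_map (Var 0)) // Hn.
Qed.

Lemma subst_ext t sg sg' :
  (forall y, occurs y t -> sg y = sg' y) -> subst sg t = subst sg' t.
Proof.
elim/term_nested_ind: t => [y|f b ts IH] /= H; first by apply: H; rewrite eqxx.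
by congr App; apply: eq_map_In => u Hu; apply: IH => // y Hy; apply/H/(In_has Hu).
Qed.

Lemma flat_subst t sg :
  (forall y, occurs y t -> flat (sg y) = sg y) -> flat (subst sg t) = subst sg (flat t).
Proof.
elim/term_nested_ind: t => [y|f b ts IH] /= H; first by apply: H; rewrite eqxx.
congr App; rewrite -!map_comp; apply: eq_map_In => u Hu /=.
by apply: IH => // y Hy; apply/H/(In_has Hu).
Qed.

Lemma flat_subst_id_var t sg y :
  flat (subst sg t) = subst sg t -> occurs y t -> flat (sg y) = sg y.
Proof.
elim/term_nested_ind: t => [z|f b ts IH] /=; first by move=> H /eqP <-.
move=> [_ E] /has_In [t0 Hin Ho]; have [i Hi Hn] := In_nth (Var 0) Hin.
apply: (IH _ Hin _ Ho); have := congr1 (fun s => nth (Var 0) s i) E.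
by rewrite -map_comp !(nth_map (Var 0)) //= Hn.
Qed.

Lemma subt_subst_annot t sg q w :
  (forall y, occurs y t -> unann (sg y)) ->
  subt (subst sg t) q = Some w -> is_annot_root w ->
  exists2 w0, subt t q = Some w0 & w = subst sg w0 /\ is_annot_root w0.
Proof.
elim: q t w => [|i q IH] [y|f b ts] w H.
- move=> /= [<-]; have : unann (sg y) by apply: H; rewrite /= eqxx.
  by case: (sg y) => // g c us /= /andP[/negbTE ->].
- by move=> [<-] Ha; exists (App f b ts).
- move=> Hs; have /unann_subt/(_ Hs) : unann (sg y) by apply: H; rewrite /= eqxx.
  by case: w {Hs} => // g c us /= /andP[/negbTE ->].
- rewrite /= size_map; case: ifP => // Hi; rewrite (nth_map (Var 0)) //.
  by apply: IH => y Hy; apply: H; exact: In_has (nth_In _ Hi) Hy.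
Qed.

Lemma subt_sharp t p : p != [::] -> subt (sharp t) p = subt t p.
Proof. by case: p => [|i p] // _; case: t. Qed.

Lemma flat_sharp t : flat (sharp t) = flat t.
Proof. by case: t. Qed.

Lemma sharp_repl t q r : q != [::] -> sharp (repl t q r) = repl (sharp t) q r.
Proof. by case: q => [|i q] // _; case: t. Qed.

Lemma annot_repl w q r : q != [::] -> is_annot_root (repl w q r) = is_annot_root w.
Proof. by case: q => [|i q] // _; case: w. Qed.

Definition restrict_subst (l : term sym) sg y := if occurs y l then sg y else Var y.

Lemma subst_restrict_sharp l sg t :
  (forall y, occurs y t -> occurs y l) -> (exists f b ts, t = App f b ts) ->
  subst (restrict_subst l sg) (sharp t) = sharp (subst sg t).
Proof.
move=> Hl [f [b [ts Et]]].
have E : subst (restrict_subst l sg) t = subst sg t.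
  by apply: subst_ext => y /Hl Hy; rewrite /restrict_subst Hy.
by move: E; rewrite Et /= => -[->].
Qed.

Lemma subt_repl_at t p r u : subt t p = Some u -> subt (repl t p r) p = Some r.
Proof.
elim: p t => [|i p IH] [y|f b ts] //=; case: ifP => // Hi Hs.
by rewrite size_set_nth (maxn_idPr Hi) Hi nth_set_nth /= eqxx; apply: IH.
Qed.

Lemma subt_repl_below t p q u r :
  subt t p = Some u -> subt (repl t p r) (p ++ q) = subt r q.
Proof. by move=> /(subt_repl_at r); rewrite subt_cat => ->. Qed.

Lemma subt_repl_above t p q w r :
  subt t p = Some w -> subt (repl t (p ++ q) r) p = Some (repl w q r).
Proof.
elim: p t => [|i p IH] [y|f b ts] //=; try by move=> [->].
case: ifP => // Hi Hs.
by rewrite size_set_nth (maxn_idPr Hi) Hi nth_set_nth /= eqxx; apply: IH.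
Qed.

Lemma subt_repl_disjoint t p pi r :
  subt t p <> None -> ~~ prefix p pi -> ~~ prefix pi p -> subt (repl t p r) pi = subt t pi.
Proof.
elim: p pi t => [|i p IH] [|j pi] t //; case: t => [y|f b ts] //=; case: ifP => // Hi Hs.
rewrite size_set_nth (maxn_idPr Hi) nth_set_nth /=.
by case: (eqVneq j i) => [->|_] //=; rewrite Hi => H1 H2; apply: IH.
Qed.

Lemma subt_flat_above_off t p pi :
  subt t p <> None -> (prefix pi p -> pi = p) -> subt (flat_above p t) pi = subt t pi.
Proof.
elim: p pi t => [|i p IH] [|j pi] t //; first by move=> _ /(_ (prefix0s _)).
case: t => [y|f b ts] //=; case: ifP => // Hi Hs Hpre.
rewrite size_set_nth (maxn_idPr Hi) nth_set_nth /=.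
case: (eqVneq j i) => [Eji|_] //=; rewrite Eji Hi; apply: IH => // Hp.
by move: Hpre; rewrite Eji eqxx /= => /(_ Hp) [].
Qed.

Lemma subt_flat_above_strict t pi q :
  subt t (pi ++ q) <> None -> q != [::] ->
  exists2 w, subt (flat_above (pi ++ q) t) pi = Some w & is_annot_root w = false.
Proof.
elim: pi t => [|j pi IH] [y|f b ts] //= Hs Hq; first by case: q Hs Hq.
- by case: q Hs Hq => // i q; eexists.
- move: Hs; case: ifP => // Hj Hs.
  by rewrite size_set_nth (maxn_idPr Hj) Hj nth_set_nth /= eqxx; apply: IH.
Qed.

Lemma flat_flat_above t p : subt t p <> None -> flat (flat_above p t) = flat t.
Proof.
elim: p t => [|i p IH] [y|f b ts] //=; case: ifP => // Hi Hs.
congr App; rewrite map_set_nth IH // -(nth_map (Var 0) (Var 0)) //.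
by rewrite set_nth_nth // size_map.
Qed.

Lemma flat_repl t p r :
  subt t p <> None -> flat (repl t p r) = repl (flat t) p (flat r).
Proof.
elim: p t => [|i p IH] [y|f b ts] //=; case: ifP => // Hi Hs.
by congr App; rewrite map_set_nth IH // (nth_map (Var 0)).
Qed.

Lemma flat_subst_matched (u l : term sym) sg y :
  flat u = subst sg l -> occurs y l -> flat (sg y) = sg y.
Proof. by move=> E; apply: flat_subst_id_var; rewrite -E flat_idem. Qed.

Fixpoint positions (t : term sym) : seq (seq nat) :=
  if t is App _ _ ts then
    [::] :: [seq i :: q | i <- iota 0 (size ts), q <- nth [::] (map positions ts) i]
  else [:: [::]].

Lemma mem_positions t u q :
  subt t q = Some u -> q \in positions t.
Proof.
elim: q t => [|i q IH] [y|f b ts] //=; try by rewrite mem_head.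
case: ifP => // Hi /IH Hq; rewrite in_cons /=; apply/allpairsPdep.
by exists i, q; rewrite mem_iota Hi (nth_map (Var 0)).
Qed.

Section WellFormed.
Variables (ar : sym -> nat) (dsym : pred sym).
Notation wf := (wf ar dsym).

Lemma wf_subt t p u : wf t -> subt t p = Some u -> wf u.
Proof.
elim: p t => [|i p IH] [x|f b ts] //=; try by move=> H [<-].
by move=> /and3P[_ _ wa]; case: ifP => // Hi; apply/IH/(all_In wa)/nth_In.
Qed.

Lemma wf_flat t : wf t -> wf (flat t).
Proof.
elim/term_nested_ind: t => [x|f b ts IH] //= /and3P[/eqP Hs _ Ha].
by rewrite size_map Hs eqxx all_map; apply: In_all => u Hu /=; apply/IH/(all_In Ha).
Qed.

Lemma wf_subst t sg : wf t -> (forall y, occurs y t -> wf (sg y)) -> wf (subst sg t).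
Proof.
elim/term_nested_ind: t => [y|f b ts IH] /=; first by move=> _ H; apply: H; rewrite eqxx.
move=> /and3P[Hs Hb Ha] Hsg; rewrite size_map Hs Hb all_map; apply: In_all => u Hu /=.
by apply: IH (all_In Ha Hu) _ => // y Hy; apply/Hsg/(In_has Hu).
Qed.

Lemma wf_repl t p r : wf t -> subt t p <> None -> wf r -> wf (repl t p r).
Proof.
elim: p t => [|i p IH] [y|f b ts] //= /and3P[Hs Hb Ha]; case: ifP => // Hi Hsub Hx.
rewrite size_set_nth (maxn_idPr Hi) Hs Hb all_set_nth //.
exact: IH (all_In Ha (nth_In _ Hi)) Hsub Hx.
Qed.

End WellFormed.
End Terms.

(** * Innermost rewrite steps *)

Section Steps.
Variables (sym : finType) (ar : sym -> nat) (dsym : pred sym) (R : realType).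
Variable P : set (adp sym R).
Hypothesis okP : forall a, P a -> adp_ok ar dsym a.
Implicit Types (s t u w : term sym) (p q pi pos : seq nat) (sg : nat -> term sym)
  (a : adp sym R) (pr : R * term sym).

(* The result [t_j] of the step in [adp_step] for the right-hand side [r = r_j]: the
   four cases (at), (af), (nt), (nf) amount to keeping the annotations of [r] iff [pos]
   is annotated, and those above [pos] iff the flag of [a] is set. *)
Definition step_term s pos a sg (r : term sym) :=
  let s' := repl s pos (subst sg (if annot_at s pos then r else flat r)) in
  if flag a then s' else flat_above pos s'.

Definition redex a s pos u sg :=
  [/\ P a, subt s pos = Some u, flat u = subst sg (lhs a) & argnf P (flat u)].

Definition step_spec a s pos u sg pr := redex a s pos u sg /\ List.In pr (rhs a).

Lemma redex_var_wf a s pos u sg y :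
  wf ar dsym (flat s) -> redex a s pos u sg -> occurs y (lhs a) ->
  wf ar dsym (sg y) /\ flat (sg y) = sg y.
Proof.
move=> Ws [_ Hs E _] Hy; split; last exact: flat_subst_matched E Hy.
have [p Hp] := occurs_subst_pos sg Hy; rewrite -E in Hp.
by apply: (wf_subt (p := pos ++ p) Ws); rewrite subt_cat subt_flat Hs.
Qed.

Lemma step_spec_rhs_var a s pos u sg pr y :
  step_spec a s pos u sg pr -> occurs y pr.2 -> flat (sg y) = sg y.
Proof.
case=> [[/okP [_ _ _ Hr _] _ E _] Hin] Hy; apply: (flat_subst_matched E).
by have [_ _ _ ->] := Hr _ Hin.
Qed.

Lemma flat_subst_rhs a s pos u sg pr : step_spec a s pos u sg pr ->
  flat (subst sg pr.2) = subst sg (flat pr.2) /\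
  flat (subst sg (flat pr.2)) = subst sg (flat pr.2).
Proof.
move=> st; have Hfix := step_spec_rhs_var st; split; first exact: flat_subst.
by rewrite flat_subst ?flat_idem // => y; rewrite occurs_flat; apply: Hfix.
Qed.

Lemma flat_step_term a s pos u sg pr : step_spec a s pos u sg pr ->
  flat (step_term s pos a sg pr.2) = repl (flat s) pos (subst sg (flat pr.2)).
Proof.
move=> st; have [[_ Hs _ _] _] := st; have [F1 F2] := flat_subst_rhs st.
have Hpos Y : subt (repl s pos Y) pos <> None by rewrite (subt_repl_at Y Hs).
rewrite /step_term; case: flag; rewrite ?flat_flat_above // flat_repl ?Hs //;
  by case: annot_at; rewrite ?F1 ?F2.
Qed.

Lemma subt_step_term_off a s pos u sg r pi :
  subt s pos = Some u -> (prefix pi pos -> pi = pos) ->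
  subt (step_term s pos a sg r) pi =
  subt (repl s pos (subst sg (if annot_at s pos then r else flat r))) pi.
Proof.
move=> Hs Hpi; rewrite /step_term; case: flag => //.
by apply: subt_flat_above_off => //; rewrite (subt_repl_at _ Hs).
Qed.

Lemma nf_np_nf w : flat w = w -> nf P w -> np_nf P w.
Proof.
move=> Fw Hnf [p [u [l [r [sg [Hp [a [Pa _ El _]] Hu]]]]]]; apply: Hnf.
by exists p, u, a, sg; rewrite Fw El.
Qed.

Lemma step_annot_above a s pos u sg pr pi q u' :
  step_spec a s pos u sg pr -> pos = pi ++ q -> q != [::] ->
  subt (step_term s pos a sg pr.2) pi = Some u' -> is_annot_root u' ->
  exists2 w, subt s pi = Some w /\ is_annot_root w &
    np_step P (sharp (flat w)) (sharp (flat u')).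
Proof.
move=> st Epos Hq; subst pos; have [[Pa Hs E Harg] Hin] := st.
move: (Hs); rewrite subt_cat; case Hw: (subt s pi) => [w|] // Hwq.
rewrite /step_term; case Hfl: (flag a); last first.
  set Y := subst sg _.
  have Hn : subt (repl s (pi ++ q) Y) (pi ++ q) <> None by rewrite (subt_repl_at _ Hs).
  by have [w0 -> Hw0] := subt_flat_above_strict Hn Hq; case=> <-; rewrite Hw0.
rewrite (subt_repl_above _ _ Hw) => -[<-]; rewrite annot_repl // => Ha.
exists w => //; exists q, (flat u), (lhs a), (flat pr.2), sg; split => //.
- by rewrite subt_sharp // subt_flat Hwq.
- by exists a; split => //; exists pr.
- move=> q' w' Hq' Hsub; apply: (nf_np_nf (subt_flat_idem Hsub)).
  exact: Harg Hq' Hsub.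
- have [F1 F2] := flat_subst_rhs st.
  by rewrite flat_repl ?Hwq // sharp_repl //; case: annot_at; rewrite ?F1 ?F2.
Qed.

Lemma step_annot_disjoint a s pos u sg r pi :
  subt s pos = Some u -> ~~ prefix pos pi -> ~~ prefix pi pos ->
  subt (step_term s pos a sg r) pi = subt s pi.
Proof.
move=> Hs Hpi Hpi'; rewrite (subt_step_term_off _ _ _ Hs); last by rewrite (negbTE Hpi').
by apply: subt_repl_disjoint => //; rewrite Hs.
Qed.

Lemma np_star_snoc s s' s'' :
  np_star P s s' -> s' = s'' \/ np_step P s' s'' -> np_star P s s''.
Proof.
elim=> [t [<-|H]|t t' t'' H1 _ IH H]; first exact: np_refl.
- exact: np_trans H (np_refl _ _).
- exact: np_trans H1 (IH H).
Qed.

Lemma step_annot_back a s pos u sg pr pi u' :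
  step_spec a s pos u sg pr -> ~~ prefix pos pi ->
  subt (step_term s pos a sg pr.2) pi = Some u' -> is_annot_root u' ->
  exists2 w, subt s pi = Some w /\ is_annot_root w &
    sharp (flat w) = sharp (flat u') \/ np_step P (sharp (flat w)) (sharp (flat u')).
Proof.
move=> st Hnp; have [[_ Hs _ _] _] := st.
case: (boolP (prefix pi pos)) => Hpp; last first.
  by rewrite (@step_annot_disjoint a s pos u sg pr.2 pi) // => Hs' Ha; exists u' => //; left.
have [q Epos] := prefixP Hpp.
have Hq : q != [::] by apply: contraNneq Hnp => Eq; rewrite Epos Eq cats0 prefix_refl.
by move=> Hs' Ha; have [w Hw Hst] := step_annot_above st Epos Hq Hs' Ha; exists w => //; right.
Qed.

Lemma step_annot_created a s pos u sg pr q u' :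
  step_spec a s pos u sg pr ->
  subt (step_term s pos a sg pr.2) (pos ++ q) = Some u' -> is_annot_root u' ->
  annot_at s pos /\
  exists2 u0, subt pr.2 q = Some u0 /\ is_annot_root u0 & flat u' = subst sg (flat u0).
Proof.
move=> st; have [[_ Hs _ _] _] := st; have Hfix := step_spec_rhs_var st.
rewrite (subt_step_term_off _ _ _ Hs); last first.
  move=> /size_prefix; rewrite size_cat -[leqRHS]addn0 leq_add2l leqn0 size_eq0.
  by move=> /eqP ->; rewrite cats0.
rewrite (subt_repl_below _ _ Hs); case: ifP => Han Hsub Ha.
- have [u0 Hq [-> Ha0]] := subt_subst_annot (fun y Hy => flat_id_unann (Hfix y Hy)) Hsub Ha.
  split => //; exists u0 => //; rewrite flat_subst // => y Hy.
  exact/Hfix/(occurs_subt Hq).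
- have Hfix' y : occurs y (flat pr.2) -> unann (sg y).
    by rewrite occurs_flat => /Hfix/flat_id_unann.
  have [w0 + [_ Hw0]] := subt_subst_annot Hfix' Hsub Ha.
  by rewrite subt_flat; case: (subt pr.2 q) => // z [Ez]; rewrite -Ez annot_flat in Hw0.
Qed.

Lemma argnf_sharp t : argnf P t -> argnf P (sharp t).
Proof. by move=> H p u Hp; rewrite subt_sharp //; exact: H. Qed.

Lemma restrict_subst_ok a s pos u sg :
  wf ar dsym (flat s) -> redex a s pos u sg -> subst_ok ar dsym (restrict_subst (lhs a) sg).
Proof.
move=> W Hr y; rewrite /restrict_subst; case: ifP => Hy //.
by have [-> /flat_id_unann ->] := redex_var_wf W Hr Hy.
Qed.

Lemma subst_restrict_lhs a s pos u sg : redex a s pos u sg ->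
  subst (restrict_subst (lhs a) sg) (sharp (lhs a)) = sharp (flat u).
Proof.
move=> [/okP [[f [ts Ef]] _ _ _ _] _ -> _].
by apply: subst_restrict_sharp => //; exists f, false, ts.
Qed.

Lemma dp_bot_lhs a : exists2 n, dp_bot a n & n.1 = sharp (lhs a).
Proof.
have [[n Hn]|Hno] := pselect (exists n, dp a n).
  by exists n; [left | case: Hn => pr [t [_ _ ->]]].
exists (sharp (lhs a), None) => //; right; split => //.
by apply/funext => n; apply/propext; split => // Hn; apply: Hno; exists n.
Qed.

Lemma Pre_of_chain b a sv posv uv sg pr q u0 sw posw uw sgw :
  step_spec b sv posv uv sg pr -> wf ar dsym (flat sv) ->
  subt pr.2 q = Some u0 -> is_annot_root u0 ->
  redex a sw posw uw sgw -> wf ar dsym (flat sw) ->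
  np_star P (sharp (subst sg (flat u0))) (sharp (flat uw)) ->
  Pre ar dsym P a b.
Proof.
move=> [rb Hin] Wv Hq Ha0 ra Ww Hstar; have [Pb _ _ _] := rb.
have [_ _ _ Hrb _] := okP Pb; have [_ _ _ Hvr] := Hrb _ Hin.
split => //; have [n2 Hn2 E2] := dp_bot_lhs a.
exists (sharp (lhs b), Some (sharp (flat u0))), n2; split => //.
  by left; exists pr, (flat u0); split => //; exists q, u0.
exists (restrict_subst (lhs b) sg), (restrict_subst (lhs a) sgw); split.
- exact: restrict_subst_ok Wv rb.
- exact: restrict_subst_ok Ww ra.
- rewrite /= E2 (subst_restrict_lhs ra) subst_restrict_sharp //.
    by move=> y; rewrite occurs_flat => /(occurs_subt Hq)/Hvr.
  by case: (u0) Ha0 => // f c us _; exists f, false, (map (@flat _) us).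
- by rewrite /= (subst_restrict_lhs rb); apply: argnf_sharp; case: rb.
- by rewrite E2 (subst_restrict_lhs ra); apply: argnf_sharp; case: ra.
Qed.

End Steps.

(** * Chain trees *)

Local Open Scope classical_set_scope.
Local Open Scope ring_scope.

Lemma sum_partition_seq (V : nmodType) (I K : eqType) (L : seq I) (key : I -> K)
    (U : seq K) (F : I -> V) :
  uniq U -> {subset map key L <= U} ->
  \sum_(x <- L) F x = \sum_(k <- U) \sum_(x <- L | key x == k) F x.
Proof.
move=> uU; elim: L => [|x L IH] HL.
  by rewrite big_nil big1 // => k _; rewrite big_nil.
rewrite big_cons IH => [|y Hy]; last by apply: HL; rewrite inE Hy orbT.
have Hx : key x \in U by apply: HL; rewrite mem_head.
rewrite [RHS](bigD1_seq (key x)) //= big_cons eqxx -addrA; congr (_ + _).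
rewrite [LHS](bigD1_seq (key x)) //=; congr (_ + _); apply: eq_bigr => k Hk.
by rewrite big_cons eq_sym (negbTE Hk).
Qed.

Definition rhs_positions (sym : finType) (R : realType) (b : adp sym R) : seq (seq nat) :=
  flatten [seq positions pr.2 | pr <- rhs b].

Definition weight (sym : finType) (R : realType) (b : adp sym R) : nat :=
  size (rhs_positions b).

Section ChainTrees.
Variables (sym : finType) (ar : sym -> nat) (dsym : pred sym) (R : realType).
Variable P : set (adp sym R).
Hypothesis okP : forall a, P a -> adp_ok ar dsym a.
Variables (T : chain_tree sym R) (t0 : term sym).
Hypothesis chainT : is_chain_tree P T (sharp t0).
Hypotheses (wf_t0 : wf ar dsym t0) (unann_t0 : unann t0).
Implicit Types (v w x d : seq nat) (p : R) (s u : term sym).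

Lemma ct_lab_parent v i :
  ct_lab T (rcons v i) <> None -> ct_lab T v <> None /\ (i < ct_nch T v)%N.
Proof. by case: chainT => _ H _ /H. Qed.

Lemma ct_parent v i p s : ct_lab T (rcons v i) = Some (p, s) ->
  exists pv sv, ct_lab T v = Some (pv, sv) /\ (i < ct_nch T v)%N.
Proof.
move=> Hc; have [] := ct_lab_parent (v := v) (i := i); first by rewrite Hc.
by case: (ct_lab T v) => [[pv sv]|] // _ Hi; exists pv, sv.
Qed.

Lemma ct_lab_prefix v d : ct_lab T (v ++ d) <> None -> ct_lab T v <> None.
Proof.
elim/last_ind: d => [|d j IH]; first by rewrite cats0.
by rewrite -rcons_cat => /ct_lab_parent [/IH].
Qed.

Lemma ct_lab_child v i p s :
  ct_lab T v = Some (p, s) -> (i < ct_nch T v)%N -> ct_lab T (rcons v i) <> None.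
Proof. by case: chainT => _ H _ Hv Hi; apply/H; rewrite Hv. Qed.

Lemma ct_redex v p s : ct_lab T v = Some (p, s) -> (0 < ct_nch T v)%N ->
  exists u sg, redex P (ct_rule T v) s (ct_pos T v) u sg.
Proof.
by case: chainT => _ _ H /H /[apply] -[res [[Pa [u [sg [Hs E Harg _]]]] _ _]]; exists u, sg.
Qed.

Lemma ct_child v i p s p' s' :
  ct_lab T v = Some (p, s) -> ct_lab T (rcons v i) = Some (p', s') ->
  exists u sg pr, [/\ step_spec P (ct_rule T v) s (ct_pos T v) u sg pr, p' = p * pr.1,
    s' = step_term s (ct_pos T v) (ct_rule T v) sg pr.2,
    pr = nth (0, Var 0) (rhs (ct_rule T v)) i & (i < size (rhs (ct_rule T v)))%N].
Proof.
move=> Hv Hc; have [_ [_ [_ Hi]]] := ct_parent Hc.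
case: chainT => _ _ /(_ v p s Hv (leq_ltn_trans (leq0n i) Hi)).
move=> [res [[Pa [u [sg [Hs E Harg Hres]]]] Hsz Hch]].
have Hi' : (i < size res)%N by rewrite Hsz.
have Hi2 : (i < size (rhs (ct_rule T v)))%N by rewrite Hres size_map in Hi'.
move: (Hch i Hi'); rewrite Hc Hres (nth_map (0, Var 0)) // => -[-> ->].
exists u, sg, (nth (0, Var 0) (rhs (ct_rule T v)) i); split => //; last first.
  by rewrite /step_term; case: annot_at; case: flag.
by split; [split | exact: nth_In].
Qed.

Lemma ct_child_prob v p s : ct_lab T v = Some (p, s) -> (0 < ct_nch T v)%N ->
  [/\ P (ct_rule T v), size (rhs (ct_rule T v)) = ct_nch T v &
      forall i, (i < ct_nch T v)%N ->
        node_prob T (rcons v i) = p * (nth (0, Var 0) (rhs (ct_rule T v)) i).1].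
Proof.
case: chainT => _ _ H Hv /(H _ _ _ Hv) [res [[Pa [u [sg [_ _ _ Hres]]]] Hsz Hch]].
have Hsz' : size (rhs (ct_rule T v)) = ct_nch T v by rewrite -Hsz Hres size_map.
split => // i Hi; have Hi' : (i < size res)%N by rewrite Hsz.
by rewrite /node_prob (Hch i Hi') Hres (nth_map (0, Var 0)) // Hsz'.
Qed.

Lemma ct_lab_inv v p s : ct_lab T v = Some (p, s) -> wf ar dsym (flat s) /\ 0 <= p.
Proof.
elim/last_ind: v p s => [|v i IH] p s.
  by case: chainT => -> _ _ [<- <-]; rewrite flat_sharp unann_flat_id.
move=> Hc; have [pv [sv [Ev _]]] := ct_parent Hc; have [Wv Pv] := IH _ _ Ev.
have [u [sg [pr [st -> -> _ _]]]] := ct_child Ev Hc; have [[Pa Hs _ _] Hin] := st.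
have [_ _ _ /(_ _ Hin) [Hp1 _ Wr Hvr] _] := okP Pa.
split; last by rewrite mulr_ge0 // ltW.
rewrite (flat_step_term okP st); apply: wf_repl => //; first by rewrite subt_flat Hs.
apply: wf_subst; first exact: wf_flat Wr.
by move=> y; rewrite occurs_flat => /Hvr Hy; have [] := redex_var_wf Wv st.1 Hy.
Qed.

Lemma node_prob_ge0 v : 0 <= node_prob T v.
Proof. by rewrite /node_prob; case E: (ct_lab T v) => [[p s]|] //; have [] := ct_lab_inv E. Qed.

Lemma annot_trace_back x d pi p s u :
  (forall k, (k < size d)%N -> ~~ prefix (ct_pos T (x ++ take k d)) pi) ->
  ct_lab T (x ++ d) = Some (p, s) -> subt s pi = Some u -> is_annot_root u ->
  exists p0 s0 u0, [/\ ct_lab T x = Some (p0, s0), subt s0 pi = Some u0,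
    is_annot_root u0 & np_star P (sharp (flat u0)) (sharp (flat u))].
Proof.
elim/last_ind: d p s u => [|d j IH] p s u Hk.
  by rewrite cats0 => Hl Hs Ha; exists p, s, u; split => //; exact: np_refl.
rewrite -rcons_cat => Hc Hs Ha.
have [pv [sv [Ev _]]] := ct_parent Hc.
have [u1 [sg [pr [st _ Es _ _]]]] := ct_child Ev Hc.
have Hnp : ~~ prefix (ct_pos T (x ++ d)) pi.
  by have := Hk (size d); rewrite size_rcons ltnSn -cats1 take_size_cat //; apply.
rewrite Es in Hs; have [w [Hw Haw] Hst] := step_annot_back okP st Hnp Hs Ha.
have Hk' k : (k < size d)%N -> ~~ prefix (ct_pos T (x ++ take k d)) pi.
  by move=> Hkd; have := Hk k; rewrite size_rcons ltnS (ltnW Hkd) -cats1 take_cat Hkd; apply.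
have [p0 [s0 [u0 [H1 H2 H3 H4]]]] := IH _ _ _ Hk' Ev Hw Haw.
by exists p0, s0, u0; split => //; exact: np_star_snoc H4 Hst.
Qed.

Lemma annot_from_root w p s pi u :
  ct_lab T w = Some (p, s) -> subt s pi = Some u -> is_annot_root u ->
  (forall k, (k < size w)%N -> ~~ prefix (ct_pos T (take k w)) pi) -> pi = [::].
Proof.
move=> Hw Hs Ha Hk.
have [p0 [s0 [u0 [H0 Hs0 Ha0 _]]]] := annot_trace_back (x := [::]) Hk Hw Hs Ha.
case: chainT H0 => -> _ _ [_ E0]; rewrite -E0 in Hs0.
apply/eqP/negP => Hne; rewrite subt_sharp in Hs0; last exact/negP.
by have := unann_subt unann_t0 Hs0; case: (u0) Ha0 => // f c us /= -> /andP[].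
Qed.

Lemma annot_created w p s pi u k :
  ct_lab T w = Some (p, s) -> subt s pi = Some u -> is_annot_root u ->
  (k < size w)%N -> prefix (ct_pos T (take k w)) pi ->
  (forall k', (k < k' < size w)%N -> ~~ prefix (ct_pos T (take k' w)) pi) ->
  exists pv sv uv sg pr q u0,
    [/\ ct_lab T (take k w) = Some (pv, sv), (0 < ct_nch T (take k w))%N,
      step_spec P (ct_rule T (take k w)) sv (ct_pos T (take k w)) uv sg pr,
      annot_at sv (ct_pos T (take k w)) & pi = ct_pos T (take k w) ++ q] /\
    [/\ subt pr.2 q = Some u0, is_annot_root u0 &
      np_star P (sharp (subst sg (flat u0))) (sharp (flat u))].
Proof.
move=> Hw Hs Ha Hk Hpre Hmax.
have Hseg k' : (k' < size (drop k.+1 w))%N ->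
    ~~ prefix (ct_pos T (take k.+1 w ++ take k' (drop k.+1 w))) pi.
  by rewrite size_drop -takeD => H; apply: Hmax; lia.
have Hw' : ct_lab T (take k.+1 w ++ drop k.+1 w) = Some (p, s) by rewrite cat_take_drop.
have [p1 [s1 [u1 [Hx Hs1 Ha1 Hst]]]] := annot_trace_back Hseg Hw' Hs Ha.
rewrite (take_nth 0%N Hk) in Hx.
have [pv [sv [Ev Hi]]] := ct_parent Hx.
have [uv [sg [pr [st _ Es1 _ _]]]] := ct_child Ev Hx.
have [q Epi] := prefixP Hpre; rewrite Es1 Epi in Hs1.
have [Hanv [u0 [Hq Ha0] Hfl]] := step_annot_created okP st Hs1 Ha1.
exists pv, sv, uv, sg, pr, q, u0; split; first by split => //; exact: leq_ltn_trans Hi.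
by split => //; rewrite -Hfl.
Qed.

Lemma sum_child_prob v p s : ct_lab T v = Some (p, s) -> (0 < ct_nch T v)%N ->
  \sum_(i <- iota 0 (ct_nch T v)) node_prob T (rcons v i) = p.
Proof.
move=> Hv Hn; have [Pa Hsz Hch] := ct_child_prob Hv Hn.
rewrite (eq_big_seq (fun i => p * (nth (0, Var 0) (rhs (ct_rule T v)) i).1)); last first.
  by move=> i; rewrite mem_iota add0n => /andP[_ /Hch].
have [_ _ _ _] := okP Pa; rewrite (big_nth (0, Var 0)) => Hsum.
by rewrite -mulr_sumr -Hsz -[X in iota 0 X]subn0 Hsum mulr1.
Qed.

Lemma sum_antichain_mem v p s G :
  ct_lab T v = Some (p, s) -> uniq G -> v \in G -> {subset G <= prefix v} ->
  {in G &, forall w1 w2, prefix w1 w2 -> w1 = w2} ->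
  \sum_(w <- G) node_prob T w <= p.
Proof.
move=> Hv uG vG Hext Hac; have Gv w : w \in G -> w = v.
  by move=> Hw; apply/esym/Hac => //; exact: Hext.
have HG : (size G <= 1)%N by apply: (uniq_leq_size (s2 := [:: v])) => // w /Gv ->; rewrite inE.
rewrite (eq_big_seq (fun _ => node_prob T v)) => [|w /Gv -> //].
rewrite big_const_seq iter_addr_0 count_predT /node_prob Hv.
have [_ Hp] := ct_lab_inv Hv.
by case: (size G) HG => [|[|]].
Qed.

Lemma proper_descendant v w : prefix v w -> w != v -> ct_lab T w <> None ->
  exists i e, w = rcons v i ++ e /\ (i < ct_nch T v)%N.
Proof.
move=> /prefixP [[|i e] ->]; first by rewrite cats0 eqxx.
move=> _; rewrite -cat_rcons => /ct_lab_prefix /ct_lab_parent [_ Hi].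
by exists i, e.
Qed.

Lemma sum_antichain_le v p s G :
  ct_lab T v = Some (p, s) -> uniq G ->
  (forall w, w \in G -> prefix v w /\ ct_lab T w <> None) ->
  {in G &, forall w1 w2, prefix w1 w2 -> w1 = w2} ->
  \sum_(w <- G) node_prob T w <= p.
Proof.
move=> Hv uG HG Hac.
have [n Hn] : exists n, {in G, forall w, size w < size v + n}%N.
  exists (\max_(w <- G) size w).+1 => w Hw; rewrite addnS ltnS.
  exact: leq_trans (leq_bigmax_seq _ Hw isT) (leq_addl _ _).
elim: n v p s G Hv uG HG Hn Hac => [|n IHn] v p s G Hv uG HG Hn Hac.
  rewrite big1_seq ?(ct_lab_inv Hv).2 // => w /andP[_ Hw].
  by move: (Hn _ Hw); rewrite addn0 ltnNge (size_prefix (HG _ Hw).1).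
have [vG|vG] := boolP (v \in G).
  by apply: sum_antichain_mem Hv uG vG _ Hac => w /HG [].
have Hdesc w : w \in G -> exists i e, w = rcons v i ++ e /\ (i < ct_nch T v)%N.
  by move=> Hw; have [Hp Hl] := HG _ Hw; apply: proper_descendant => //; apply: contraNneq vG => <-.
have [Hnch|Hnch] := posnP (ct_nch T v).
  rewrite big1_seq ?(ct_lab_inv Hv).2 // => w /andP[_ /Hdesc].
  by rewrite Hnch => -[i [e [_]]].
pose child w := nth 0%N w (size v).
have child_rcons i e : child (rcons v i ++ e) = i.
  by rewrite /child -cats1 -catA nth_cat ltnn subnn.
rewrite (@sum_partition_seq _ _ _ G child (iota 0 (ct_nch T v))) ?iota_uniq //; last first.
  by move=> _ /mapP [w /Hdesc [i [e [-> Hi]]] ->]; rewrite child_rcons mem_iota.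
rewrite -(sum_child_prob Hv Hnch) big_seq [leRHS]big_seq; apply: ler_sum => i.
rewrite mem_iota add0n => /andP[_ Hi]; rewrite -big_filter.
case Ec: (ct_lab T (rcons v i)) (ct_lab_child Hv Hi) => [[pc sc]|] // _.
rewrite /node_prob Ec; apply: (IHn _ _ _ _ Ec); first exact: filter_uniq.
- move=> w; rewrite mem_filter => /andP[/eqP Hcw Hw]; split; last by have [] := HG _ Hw.
  by have [j [e [Ew _]]] := Hdesc _ Hw; rewrite Ew -Hcw Ew child_rcons prefix_prefix.
- by move=> w; rewrite mem_filter size_rcons addSnnS => /andP[_ /Hn].
- by move=> w1 w2; rewrite !mem_filter => /andP[_ H1] /andP[_ H2]; apply: Hac.
Qed.

Definition above w k := prefix (ct_pos T (take k w)) (ct_pos T w).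

Definition last_above w : option nat :=
  if [pick k : 'I_(size w) | above w k] is Some k0 then
    Some (val [arg max_(k > k0 | above w k) val k])
  else None.

Variant last_above_spec w : option nat -> Prop :=
| NoneAbove of (forall k, (k < size w)%N -> ~~ above w k) : last_above_spec w None
| LastAbove k of (k < size w)%N & above w k & (forall k', (k < k' < size w)%N -> ~~ above w k') :
    last_above_spec w (Some k).

Lemma last_aboveP w : last_above_spec w (last_above w).
Proof.
rewrite /last_above; case: pickP => [k0 Hk0|Hn].
  case: arg_maxnP => // km Hkm Hmax; apply: LastAbove (ltn_ord km) Hkm _ => k' /andP[H1 H2].
  by apply/negP => Hp; have := Hmax (Ordinal H2) Hp; rewrite /= leqNgt H1.
by apply: NoneAbove => k Hk; have := Hn (Ordinal Hk); rewrite /= => ->.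
Qed.

(* Nodes are grouped by the node whose step created the annotation they rewrite
   ([None] for the root annotation) and by the position of that annotation. *)
Definition creator w := omap (take^~ w) (last_above w).

Definition key w := (creator w, ct_pos T w).

Lemma key_antichain w1 w2 : key w1 = key w2 -> prefix w1 w2 -> w1 = w2.
Proof.
move=> [Ec Ep] /prefixP [e Ew2]; have [E0|He] := eqVneq e [::]; first by rewrite Ew2 E0 cats0.
have Hsz : (size w1 < size w2)%N by rewrite Ew2 size_cat -[ltnLHS]addn0 ltn_add2l lt0n size_eq0.
have Hp : above w2 (size w1).
  by rewrite /above Ew2 take_size_cat // -Ew2 -Ep prefix_refl.
move: Ec; rewrite /creator; case: (last_aboveP w2) => [H2|k2 Hk2 _ Hmax2].
  by have := H2 _ Hsz; rewrite Hp.
case: (last_aboveP w1) => // k1 Hk1 _ _ [E].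
have Ek : k1 = k2 by have := congr1 size E; rewrite !size_takel // ltnW // (ltn_trans Hk1).
by have := Hmax2 (size w1); rewrite -Ek Hk1 Hsz Hp => /(_ isT).
Qed.

Lemma creator_prefix w v : creator w = Some v -> prefix v w.
Proof. by rewrite /creator; case: last_above => //= k [<-]; exact: prefix_take. Qed.

Definition key_bound (k : option (seq nat) * seq nat) : R :=
  if k.1 is Some v then node_prob T v else 1.

Lemma sum_same_key_le L k : uniq L -> (forall w, w \in L -> ct_lab T w <> None) ->
  \sum_(w <- L | key w == k) node_prob T w <= key_bound k.
Proof.
move=> uL HL; rewrite -big_filter; set G := seq.filter _ L.
have HG w : w \in G -> key w = k /\ ct_lab T w <> None.
  by rewrite mem_filter => /andP[/eqP ? /HL].
have Hac : {in G &, forall w1 w2, prefix w1 w2 -> w1 = w2}.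
  by move=> w1 w2 /HG [E1 _] /HG [E2 _]; apply: key_antichain; rewrite E1 E2.
have uG : uniq G by exact: filter_uniq.
rewrite /key_bound; case: k => [[v|] pi] /= in G HG Hac uG *; last first.
  have Hr : ct_lab T [::] = Some (1, sharp t0) by case: chainT.
  by apply: sum_antichain_le Hr uG _ Hac => w /HG [_ Hw]; rewrite prefix0s.
have Hpre w : w \in G -> prefix v w.
  by move=> /HG [Ek _]; apply: creator_prefix; exact: (congr1 fst Ek).
case Ev: (ct_lab T v) => [[pv sv]|].
  rewrite /node_prob Ev; apply: sum_antichain_le Ev uG _ Hac => w Hw.
  by split; [exact: Hpre | exact: (HG _ Hw).2].
rewrite big1_seq ?node_prob_ge0 // => w /andP[_ Hw]; have [_ Hl] := HG _ Hw.
by move: Hl; have /prefixP [e ->] := Hpre _ Hw; move/ct_lab_prefix; rewrite Ev.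
Qed.

Lemma sum_root_keys_le U : uniq U -> {in U, forall k, k.1 = None -> k = (None, [::])} ->
  \sum_(k <- U | k.1 == None) key_bound k <= 1.
Proof.
move=> uU HU; rewrite (eq_bigr (fun _ => 1)) => [|k /eqP Ek]; last by rewrite /key_bound Ek.
rewrite big_const_seq iter_addr_0 lern1 -size_filter.
apply: (uniq_leq_size (s2 := [:: (None, [::])])); first exact: filter_uniq.
by move=> k; rewrite mem_filter => /andP[/eqP Ek Hk]; rewrite (HU _ Hk Ek) mem_head.
Qed.

Definition created_keys v := [seq (Some v, ct_pos T v ++ q) | q <- rhs_positions (ct_rule T v)].

Lemma created_keys_fst v k : k \in created_keys v -> k.1 = Some v.
Proof. by case/mapP=> q _ ->. Qed.

Lemma sum_creator_keys_le v U (B : nat) : uniq U -> (weight (ct_rule T v) <= B)%N ->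
  {in U, forall k, k.1 = Some v -> k \in created_keys v} ->
  \sum_(k <- U | k.1 == Some v) key_bound k <= B%:R * node_prob T v.
Proof.
move=> uU HB HU; rewrite (eq_bigr (fun _ => node_prob T v)) => [|k /eqP Ek]; last first.
  by rewrite /key_bound Ek.
rewrite big_const_seq iter_addr_0 -[leLHS]mulr_natl; apply: ler_wpM2r; rewrite ?node_prob_ge0 // ler_nat.
apply: leq_trans HB; rewrite -size_filter /weight -(size_map (fun q => (Some v, ct_pos T v ++ q))).
apply: uniq_leq_size; first exact: filter_uniq.
by move=> k; rewrite mem_filter => /andP[/eqP Ek Hk]; exact: HU.
Qed.

Variables (S : set (adp sym R)) (a : adp sym R).
Hypothesis Pre_S : Pre ar dsym P a `&` S = set0.

(* The only use of [Pre_S]: the creator of the annotation is a predecessor of [a]. *)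
Lemma key_alpha w : counted S T w -> ct_rule T w = a ->
  key w = (None, [::]) \/ exists2 v, counted (P `\` S) T v & key w \in created_keys v.
Proof.
move=> [p [s [Hw Hn _ Han]]] Ha; rewrite /annot_at in Han.
case Esw: (subt s (ct_pos T w)) Han => [uw|] // Hauw.
rewrite /key /creator; case: (last_aboveP w) => [Hnone|k Hk Hab Hmax] /=.
  by left; rewrite (annot_from_root Hw Esw Hauw Hnone).
have [uw' [sgw rw]] := ct_redex Hw Hn.
have [pv [sv [uv [sg [pr [q [u0 [[Hv Hnv st Hanv Epos] [Hq Ha0 Hstar]]]]]]]]] :=
  annot_created Hw Esw Hauw Hk Hab Hmax.
have [_ Esw' _ _] := rw; rewrite Esw in Esw'; case: Esw' rw => <-; rewrite Ha => rw.
have [[Wv _] [Ww _]] := (ct_lab_inv Hv, ct_lab_inv Hw).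
have Hb := Pre_of_chain okP st Wv Hq Ha0 rw Ww Hstar.
have NSb : ~ S (ct_rule T (take k w)).
  by move=> Sb; have : (Pre ar dsym P a `&` S) (ct_rule T (take k w)) by []; rewrite Pre_S.
right; exists (take k w); first by exists pv, sv; split => //; split => //; case: st => -[].
by rewrite Epos; apply: map_f; apply: In_mem_flatten_map st.2 (mem_positions Hq).
Qed.

Lemma sum_alpha_le (B : nat) L : (forall b, P b -> (weight b <= B)%N) -> uniq L ->
  (forall w, w \in L -> counted S T w /\ ct_rule T w = a) ->
  exists L', [/\ uniq L', (forall v, v \in L' -> counted (P `\` S) T v) &
    \sum_(w <- L) node_prob T w <= 1 + B%:R * \sum_(v <- L') node_prob T v].
Proof.
move=> HB uL HL; set U := undup (map key L); set L' := undup (pmap fst U).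
have HU k : k \in U -> k = (None, [::]) \/ exists2 v, counted (P `\` S) T v & k \in created_keys v.
  by rewrite mem_undup => /mapP [w /HL [Hc Ha] ->]; apply: key_alpha.
have HUv k v : k \in U -> k.1 = Some v -> counted (P `\` S) T v /\ k \in created_keys v.
  by move=> /HU [-> //|[v' Hc Hk]] Ek; move: (created_keys_fst Hk); rewrite Ek => -[->].
have HL' v : v \in L' -> counted (P `\` S) T v.
  by rewrite mem_undup mem_pmap => /mapP [k Hk /esym /(HUv _ _ Hk) []].
exists L'; split => //; first exact: undup_uniq.
rewrite (@sum_partition_seq _ _ _ L key U) ?undup_uniq //; last by move=> k; rewrite mem_undup.
apply: le_trans (_ : \sum_(k <- U) key_bound k <= _).
  apply: ler_sum => k _; apply: sum_same_key_le => // w /HL [[p [s [-> _]]]] //.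
rewrite (@sum_partition_seq _ _ _ U fst (None :: map Some L')); first last.
- move=> _ /mapP [k Hk ->]; case Ek: k.1 => [v|]; rewrite ?mem_head // in_cons map_f //.
  by rewrite mem_undup mem_pmap -Ek map_f.
- by rewrite /= map_inj_uniq ?undup_uniq ?andbT //; [apply/mapP => -[] | move=> ? ? []].
rewrite big_cons big_map; apply: lerD.
  by apply: sum_root_keys_le; [exact: undup_uniq | move=> k /HU [//|[v _ /created_keys_fst ->]]].
rewrite mulr_sumr big_seq [leRHS]big_seq; apply: ler_sum => v /HL' Hv.
have [p [s [_ _ [/HB HBv _] _]]] := Hv.
by apply: sum_creator_keys_le HBv _ => [|k Hk Ek]; [exact: undup_uniq | exact: (HUv _ _ Hk Ek).2].
Qed.

End ChainTrees.

(** * Complexity classes *)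

Section Complexity.
Variable R : realType.
Local Open Scope ereal_scope.
Implicit Types (f g : nat -> \bar R) (c d : cplx).

Definition in_cplx c f : Prop :=
  match c with
  | Pol a => inPol a f
  | CExp => inExp f
  | C2Exp => in2Exp f
  | CFin => inFin f
  | COmega => True
  end.

Lemma in_cplx_iota f : in_cplx (Defs.iota f) f.
Proof.
rewrite /Defs.iota; case: pselect => [H|H] /=; first by case: ex_minnP => m /asboolP.
by case: ifP => [/asboolP //|_]; case: ifP => [/asboolP //|_]; case: ifP => [/asboolP|].
Qed.

Lemma iota_min f c : in_cplx c f -> cle (Defs.iota f) c.
Proof.
rewrite /Defs.iota; case: pselect => [H|H].
  by case: ex_minnP => m Hm Hmin; case: c => [a||||] //= /asboolP /Hmin.
case: c => [a||||] /= Hc; first by case: H; exists a.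
- by rewrite (asboolT Hc).
- by case: ifP => // _; rewrite (asboolT Hc).
- by case: ifP => // _; case: ifP => // _; rewrite (asboolT Hc).
- by case: ifP => // _; case: ifP => // _; case: ifP.
Qed.

Lemma bigO_le f (h h' : nat -> R) (N0 : nat) :
  (forall n, (N0 <= n)%N -> (0 <= h n <= h' n)%R) -> bigO f h -> bigO f h'.
Proof.
move=> Hh [c [N H]]; exists `|c|%R, (maxn N N0) => n; rewrite geq_max => /andP[H1 /Hh /andP[h0 hh]].
apply: le_trans (H n H1) _; rewrite lee_fin.
by apply: le_trans (_ : `|c| * h n <= _)%R; [rewrite ler_wpM2r ?ler_norm | rewrite ler_wpM2l].
Qed.

Lemma expn_le_exp2 n a : (n ^ a <= 2 ^ (n * a))%N.
Proof.
elim: a => [|a IH]; first by rewrite muln0.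
by rewrite mulnS expnD expnS leq_mul // ltnW // ltn_expl.
Qed.

Lemma in_cplx_le f c d : {homo f : n m / (n <= m)%N >-> n <= m} ->
  cle c d -> in_cplx c f -> in_cplx d f.
Proof.
move=> Hf.
have pol_exp a : inPol a f -> inExp f.
  move=> H; exists [:: 0%N; a]; apply: (bigO_le (N0 := 0%N) _ H) => n _ /=.
  by rewrite -!natrX ler_nat ler0n muln0 addn0 add0n expn_le_exp2.
have exp_2exp : inExp f -> in2Exp f.
  move=> [p H]; exists p; apply: (bigO_le (N0 := 0%N) _ H) => n _.
  by rewrite -!natrX ler_nat ler0n leq_pexp2l // ltnW // ltn_expl.
have exp2_fin : in2Exp f -> inFin f.
  move=> [p [k [N H]]] n; apply/negP => /eqP E.
  by have := le_trans (Hf n (maxn n N) (leq_maxl _ _)) (H _ (leq_maxr _ _)); rewrite E leye_eq.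
case: c => [a||||]; case: d => [b||||] //= Hcd Hc; try by eauto.
by apply: (bigO_le (N0 := 1%N) _ Hc) => n Hn; rewrite -!natrX ler_nat ler0n leq_pexp2l.
Qed.

Fixpoint polyadd (p q : seq nat) : seq nat :=
  match p, q with
  | [::], q => q
  | p, [::] => p
  | a :: p', b :: q' => (a + b)%N :: polyadd p' q'
  end.

Lemma polyval_add p q n : polyval (polyadd p q) n = (polyval p n + polyval q n)%N.
Proof. by elim: p q => [|a p IH] [|b q] //=; rewrite ?addn0 // IH; lia. Qed.

Lemma bigO_affine f g1 g2 (K : nat) (h1 h2 h : nat -> R) (N0 : nat) :
  (forall n, (N0 <= n)%N -> [/\ 0 <= h1 n <= h n, 0 <= h2 n <= h n & 1 <= h n]%R) ->
  bigO g1 h1 -> bigO g2 h2 -> (forall n, f n <= g1 n + (1 + K%:R%:E * g2 n)) -> bigO f h.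
Proof.
move=> Hh [c1 [N1 H1]] [c2 [N2 H2]] Hf.
exists (`|c1| + 1 + K%:R * `|c2|)%R, (maxn N0 (maxn N1 N2)) => n.
rewrite !geq_max => /and3P[/Hh [/andP[h1p h1h] /andP[h2p h2h] hge1] Hn1 Hn2].
apply: le_trans (Hf n) _.
apply: (@le_trans _ _ ((c1 * h1 n)%:E + (1%:E + K%:R%:E * (c2 * h2 n)%:E))).
  by apply: leeD (H1 _ Hn1) _; apply: leeD2l; apply: lee_wpmul2l; rewrite ?lee_fin ?H2.
rewrite -EFinM; change ((c1 * h1 n + (1 + K%:R * (c2 * h2 n)))%R%:E <=
  ((`|c1| + 1 + K%:R * `|c2|) * h n)%R%:E); rewrite lee_fin.
have e1 : (c1 * h1 n <= `|c1| * h n)%R.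
  by apply: le_trans (_ : `|c1| * h1 n <= _)%R; rewrite ?ler_wpM2r ?ler_wpM2l ?ler_norm.
have e2 : (K%:R * (c2 * h2 n) <= K%:R * (`|c2| * h n))%R.
  apply: ler_wpM2l => //; apply: le_trans (_ : `|c2| * h2 n <= _)%R.
    by rewrite ler_wpM2r ?ler_norm.
  by rewrite ler_wpM2l.
rewrite !mulrDl mul1r -mulrA; lra.
Qed.

Lemma affine_fin (x y z : \bar R) (K : nat) :
  x != +oo -> y != +oo -> z <= x + (1 + K%:R%:E * y) -> z != +oo.
Proof.
move=> Hx Hy Hz; apply/negP => /eqP Ez; move: Hz; rewrite Ez leye_eq.
case: x Hx => [r1| |] // _; case: y Hy => [r2| |] // _.
by have [->|HK] := eqVneq K 0%N; rewrite ?mul0e // mulrNy gtr0_sg ?ltr0n ?lt0n // mul1e.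
Qed.

Lemma in_cplx_affine f g1 g2 (K : nat) c :
  (forall n, f n <= g1 n + (1 + K%:R%:E * g2 n)) ->
  in_cplx c g1 -> in_cplx c g2 -> in_cplx c f.
Proof.
move=> Hf; case: c => [a||||] //=.
- move=> H1 H2; apply: (bigO_affine (N0 := 1%N) _ H1 H2 Hf) => n Hn.
  by rewrite -natrX ler0n lexx ler1n expn_gt0 Hn.
- move=> [p1 H1] [p2 H2]; exists (polyadd p1 p2).
  apply: (bigO_affine (N0 := 0%N) _ H1 H2 Hf) => n _ /=.
  rewrite -!natrX !ler0n !ler_nat ler1n expn_gt0 /= polyval_add.
  by rewrite !leq_pexp2l ?leq_addr ?leq_addl.
- move=> [p1 H1] [p2 H2]; exists (polyadd p1 p2).
  apply: (bigO_affine (N0 := 0%N) _ H1 H2 Hf) => n _ /=.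
  rewrite -!natrX !ler0n !ler_nat ler1n expn_gt0 /= polyval_add.
  by rewrite !leq_pexp2l ?leq_addr ?leq_addl ?expn_gt0.
- by move=> H1 H2 n; exact: affine_fin (H1 n) (H2 n) (Hf n).
Qed.

Lemma cle_refl c : cle c c.
Proof. by case: c => //= a; rewrite leqnn. Qed.

Lemma cle_trans c d e : cle c d -> cle d e -> cle c e.
Proof. by case: c => [a||||]; case: d => [b||||]; case: e => [k||||] //=; apply: leq_trans. Qed.

Lemma cle_total c d : cle c d || cle d c.
Proof. by case: c => [a||||]; case: d => [b||||] //=; apply: leq_total. Qed.

Lemma cle_maxl c d : cle c (cmax c d).
Proof. by rewrite /cmax; case: ifP => // _; exact: cle_refl. Qed.

Lemma cle_maxr c d : cle d (cmax c d).
Proof. by rewrite /cmax; case: ifP => [_|H]; [exact: cle_refl | have := cle_total c d; rewrite H]. Qed.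

Lemma cmax_lub c d e : cle c e -> cle d e -> cle (cmax c d) e.
Proof. by rewrite /cmax; case: ifP. Qed.

Lemma iota_affine_le f g1 g2 (K : nat) :
  {homo g1 : n m / (n <= m)%N >-> n <= m} -> {homo g2 : n m / (n <= m)%N >-> n <= m} ->
  (forall n, f n <= g1 n + (1 + K%:R%:E * g2 n)) ->
  cle (Defs.iota f) (cmax (Defs.iota g1) (Defs.iota g2)).
Proof.
move=> M1 M2 Hf; apply/iota_min/(in_cplx_affine Hf).
- exact: in_cplx_le M1 (cle_maxl _ _) (in_cplx_iota g1).
- exact: in_cplx_le M2 (cle_maxr _ _) (in_cplx_iota g2).
Qed.

End Complexity.

Lemma weight_bound (sym : finType) (R : realType) (P : set (adp sym R)) :
  finite_set P -> exists B, forall b, P b -> (weight b <= B)%N.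
Proof.
move=> /(finite_image (@weight sym R)) /finite_seqP [s Es].
exists (\max_(x <- s) x) => b Pb.
have Hb : weight b \in s by have : [set` s] (weight b) by rewrite -Es; exists b.
exact: (@leq_bigmax_seq _ s xpredT (fun x => x) _ Hb isT).
Qed.

Definition edh_max (sym : finType) (ar : sym -> nat) (dsym : pred sym) (R : realType)
    (P Z : set (adp sym R)) (n : nat) : \bar R :=
  ereal_sup [set edh P Z t | t in [set t | basic ar dsym P t /\ (Defs.tsize t <= n)%N]].

Lemma edh_max_homo (sym : finType) (ar : sym -> nat) (dsym : pred sym) (R : realType)
    (P Z : set (adp sym R)) :
  {homo edh_max ar dsym P Z : n m / (n <= m)%N >-> (n <= m)%E}.
Proof.
move=> n m Hnm; apply: ereal_sup_le => _ [t [Hb Hs] <-].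
by exists t => //; split => //; exact: leq_trans Hs Hnm.
Qed.

Lemma ereal_sup_affine_le (R : realType) (I : Type) (A : set I) (f g h : I -> \bar R) (c : R) :
  (0 <= c)%R -> (forall i, A i -> f i <= g i + (1 + c%:E * h i))%E ->
  (ereal_sup (f @` A) <= ereal_sup (g @` A) + (1 + c%:E * ereal_sup (h @` A)))%E.
Proof.
move=> c0 H; apply: ge_ereal_sup => _ [i Ai <-]; apply: le_trans (H i Ai) _.
apply: leeD; first by apply: ereal_sup_ubound; exists i.
apply: leeD2l; apply: lee_wpmul2l; first by rewrite lee_fin.
by apply: ereal_sup_ubound; exists i.
Qed.

Section Split.
Variables (sym : finType) (ar : sym -> nat) (dsym : pred sym) (R : realType).
Variables (P S : set (adp sym R)) (a : adp sym R) (B : nat).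
Hypothesis okP : forall b, P b -> adp_ok ar dsym b.
Hypothesis Pre_S : Pre ar dsym P a `&` S = set0.
Hypothesis Sa : S a.
Hypothesis weight_B : forall b, P b -> (weight b <= B)%N.
Variables X Y : set (adp sym R).
Hypothesis XY : forall b, X b -> b <> a -> Y b.
Local Open Scope ereal_scope.

Lemma edl_split T t0 : is_chain_tree P T (sharp t0) -> wf ar dsym t0 -> unann t0 ->
  edl X T <= edl Y T + (1 + B%:R%:E * edl (P `\` S) T).
Proof.
move=> chainT W U; apply: ge_ereal_sup => _ [l [ul Hl] <-].
pose is_a v := `[< ct_rule T v = a >].
rewrite (bigID (fun v => ~~ is_a v)) /=; apply: leeD.
  rewrite -big_filter; apply: ereal_sup_ubound; exists [seq v <- l | ~~ is_a v] => //.
  split; first exact: filter_uniq.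
  move=> v; rewrite mem_filter => /andP[Hv /Hl [q [s [Hlab Hn HX Han]]]].
  by exists q, s; split => //; apply: XY HX _ => E; move: Hv; rewrite /is_a asboolT.
under eq_bigl do rewrite negbK.
rewrite -big_filter sumEFin.
have Hla w : w \in [seq v <- l | is_a v] -> counted S T w /\ ct_rule T w = a.
  rewrite mem_filter => /andP[/asboolP Ea /Hl [q [s [Hlab Hn _ Han]]]].
  by split => //; exists q, s; rewrite Ea.
have [L' [uL' HL' Hle]] := sum_alpha_le okP chainT W U Pre_S weight_B (filter_uniq _ ul) Hla.
apply: le_trans (_ : (1 + B%:R * \sum_(v <- L') node_prob T v)%R%:E <= _); first by rewrite lee_fin.
rewrite EFinD EFinM; apply: leeD2l; apply: lee_wpmul2l; first by rewrite lee_fin.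
by rewrite -sumEFin; apply: ereal_sup_ubound; exists L'.
Qed.

Lemma edh_split t : basic ar dsym P t ->
  edh P X t <= edh P Y t + (1 + B%:R%:E * edh P (P `\` S) t).
Proof. by move=> [W U _]; apply: ereal_sup_affine_le => // T HT; exact: edl_split HT W U. Qed.

Lemma edh_max_split n :
  edh_max ar dsym P X n <= edh_max ar dsym P Y n + (1 + B%:R%:E * edh_max ar dsym P (P `\` S) n).
Proof. by apply: ereal_sup_affine_le => // t [Hb _]; exact: edh_split. Qed.

Lemma iota_prob_split :
  cle (iota_prob ar dsym P X) (cmax (iota_prob ar dsym P Y) (iota_prob ar dsym P (P `\` S))).
Proof. exact: iota_affine_le (edh_max_homo _ _ _ _) (edh_max_homo _ _ _ _) edh_max_split. Qed.

End Split.

Local Close Scope ring_scope.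

Theorem mainTheorem8 (sym : finType) (ar : sym -> nat) (dsym : pred sym)
  (R : realType) (P S : set (adp sym R)) (a : adp sym R) :
  problem_ok ar dsym P S ->
  S a ->
  Pre ar dsym P a `&` S = set0 ->
  sound_output ar dsym P S (Pol 0) [:: (P, S `\ a)].
Proof.
move=> [finP _ okP] Sa Pre_S T _ WF v c ch Hv.
have [B HB] := weight_bound finP.
have [_ HPS] := WF v P S c ch Hv.
split => [|_ _ [[<- <-]|//]].
- apply: cle_trans (iota_prob_split okP Pre_S Sa HB (X := S) (Y := S `\ a) _) _.
    by move=> b Sb Hb; split.
  apply: cmax_lub; first exact: cle_maxl.
  by apply: cle_trans HPS _; apply: cle_trans (cle_maxl _ (Pol 0)) (cle_maxr _ _).
- apply: cle_trans (iota_prob_split okP Pre_S Sa HB (X := P `\` (S `\ a)) (Y := P `\` S) _) _.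
    by move=> b [Pb NS] Hb; split => // Sb; apply: NS; split.
  by apply: cmax_lub; apply: cle_trans HPS (cle_maxl _ _).
Qed.
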